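(* Let $L$ be a finite simple lattice such that the join of all atoms of $L$ equals $1$, or the meet of all coatoms of $L$ equals $0$. Then the only tolerances on $L$ are $\mathrm{id}_L$ and $L^2$, and consequently $\mathsf{C}(L)=\mathsf{Pol}_{0,1}(L)$.
   Context: $L$ has bounds $0,1$. An atom is an element covering $0$; a coatom is an element covered by $1$. $L$ is simple if its only congruences (compatible equivalence relations) are $\mathrm{id}_L=\{(x,x):x\in L\}$ and $L^2$. A tolerance on $L$ is a reflexive, symmetric binary relation $T$ such that $(a,b),(c,d)\in T$ imply $(a\vee c,b\vee d),(a\wedge c,b\wedge d)\in T$. An $n$-ary aggregation function on $L$ ($n\ge1$) is a nondecreasing map $A:L^n\to L$ with $A(0,\dots,0)=0$, $A(1,\dots,1)=1$; $\mathsf{C}(L)$ is the set of all of them. Polynomials on $L$ are functions $L^n\to L$ built from projections and constants by finitely many pointwise joins and meets; $\mathsf{Pol}_{0,1}(L)$ is the set of polynomials preserving $0$ and $1$. *)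

From HB Require Import structures.
From mathcomp Require Import all_boot all_order.
Set Implicit Arguments. Unset Strict Implicit. Unset Printing Implicit Defensive.
Import Order.TTheory.
Local Open Scope order_scope.

Section LatticeDefs.
Context {d : Order.disp_t} {L : finTBLatticeType d}.

Definition atom (a : L) : bool :=
  (\bot < a) && ~~ [exists x : L, (\bot < x) && (x < a)].
Definition coatom (a : L) : bool :=
  (a < \top) && ~~ [exists x : L, (a < x) && (x < \top)].

Definition lattice_compatible (R : L -> L -> Prop) : Prop :=
  forall a b c e : L, R a b -> R c e ->
    R (a `|` c) (b `|` e) /\ R (a `&` c) (b `&` e).

Definition congruence (R : L -> L -> Prop) : Prop :=
  (forall x, R x x) /\ (forall x y, R x y -> R y x) /\
  (forall x y z, R x y -> R y z -> R x z) /\ lattice_compatible R.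

Definition tolerance (R : L -> L -> Prop) : Prop :=
  (forall x, R x x) /\ (forall x y, R x y -> R y x) /\ lattice_compatible R.

Definition is_identity_rel (R : L -> L -> Prop) : Prop :=
  forall x y, R x y <-> x = y.
Definition is_full_rel (R : L -> L -> Prop) : Prop :=
  forall x y, R x y.

Definition simple_lattice : Prop :=
  forall R, congruence R -> is_identity_rel R \/ is_full_rel R.

Definition aggregation (n : nat) (A : ('I_n -> L) -> L) : Prop :=
  (forall x y : 'I_n -> L, (forall i, x i <= y i) -> A x <= A y) /\
  A (fun _ => \bot) = \bot /\ A (fun _ => \top) = \top.

End LatticeDefs.

Inductive lpoly (T : Type) (n : nat) : Type :=
| PVar of 'I_n
| PConst of T
| PJoin of lpoly T n & lpoly T n
| PMeet of lpoly T n & lpoly T n.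

Fixpoint lpoly_eval {d : Order.disp_t} {L : finTBLatticeType d} {n : nat}
    (p : lpoly L n) (x : 'I_n -> L) : L :=
  match p with
  | PVar i => x i
  | PConst c => c
  | PJoin p q => lpoly_eval p x `|` lpoly_eval q x
  | PMeet p q => lpoly_eval p x `&` lpoly_eval q x
  end.

Definition pol01 {d : Order.disp_t} {L : finTBLatticeType d} (n : nat)
    (f : ('I_n -> L) -> L) : Prop :=
  (exists p : lpoly L n, forall x, f x = lpoly_eval p x) /\
  f (fun _ => \bot) = \bot /\ f (fun _ => \top) = \top.

From HB Require Import structures.
From mathcomp Require Import all_boot all_order.
From Stdlib Require Import Relation_Operators Operators_Properties.
Import Order.TTheory.
Local Open Scope order_scope.
Set Implicit Arguments. Unset Strict Implicit.

(* The reflexive-transitive closure of a tolerance T is a congruence, so by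
   simplicity it is either the identity (and then so is T) or everything.  In
   the latter case a chain from 0 to an atom a, met with a, takes only the
   values 0 and a, so some T-step gives T 0 a; joining these over all atoms
   gives T 0 1 and then T is full (dually for coatoms).
   For the second claim, apply this to the tolerance {(p(x,y), p(y,x))} given
   by binary polynomials p: for b not below y it yields a polynomial sending
   (b v y, y) to 1 and (y, b v y) to 0.  Meets of such polynomials realize the
   indicator of every principal filter of L^n, and a monotone f is the join of
   the f(c) /\ [c <= z]. *)

Section ReflTransClosure.
Variables (A : Type) (R : A -> A -> Prop).

Lemma clos_rt_map (h : A -> A) :
  (forall x y, R x y -> R (h x) (h y)) ->
  forall x y, clos_refl_trans _ R x y -> clos_refl_trans _ R (h x) (h y).
Proof.
move=> hR x y; elim=> [u v /hR|u|u v w _ Huv _ Hvw]; first exact: rt_step.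
  exact: rt_refl.
exact: rt_trans Huv Hvw.
Qed.

Lemma clos_rt_sym : (forall x y, R x y -> R y x) ->
  forall x y, clos_refl_trans _ R x y -> clos_refl_trans _ R y x.
Proof.
move=> Rsym x y; elim=> [u v /Rsym|u|u v w _ Hvu _ Hwv]; first exact: rt_step.
  exact: rt_refl.
exact: rt_trans Hwv Hvu.
Qed.

Lemma clos_rt_cross (P : pred A) x y : clos_refl_trans _ R x y -> P x -> ~~ P y ->
  exists u v, [/\ R u v, P u & ~~ P v].
Proof.
move/clos_rt_rt1n_iff; elim=> [u /[swap]/negP //|u v w Ruv _ IH Pu Nw].
by case Pv: (P v); [exact: IH | exists u, v; rewrite Pv].
Qed.

End ReflTransClosure.

Section Tolerance.
Context {d : Order.disp_t} {L : finTBLatticeType d}.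
Variable T : L -> L -> Prop.
Hypothesis T_tol : tolerance T.

Let Trefl : forall x, T x x := T_tol.1.
Let Tsym : forall x y, T x y -> T y x := T_tol.2.1.
Let Tcomp : lattice_compatible T := T_tol.2.2.

Lemma tol_joinr z x y : T x y -> T (x `|` z) (y `|` z).
Proof. by move=> Txy; have [] := Tcomp Txy (Trefl z). Qed.

Lemma tol_joinl z x y : T x y -> T (z `|` x) (z `|` y).
Proof. by move=> Txy; have [] := Tcomp (Trefl z) Txy. Qed.

Lemma tol_meetr z x y : T x y -> T (x `&` z) (y `&` z).
Proof. by move=> Txy; have [] := Tcomp Txy (Trefl z). Qed.

Lemma tol_meetl z x y : T x y -> T (z `&` x) (z `&` y).
Proof. by move=> Txy; have [] := Tcomp (Trefl z) Txy. Qed.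

Lemma clos_rt_tol_congruence : congruence (clos_refl_trans _ T).
Proof.
split; first exact: rt_refl.
split; first exact: clos_rt_sym.
split; first exact: rt_trans.
move=> a b c e Hab Hce; split; apply: rt_trans.
- exact: clos_rt_map (tol_joinr c) _ _ Hab.
- exact: clos_rt_map (tol_joinl b) _ _ Hce.
- exact: clos_rt_map (tol_meetr c) _ _ Hab.
- exact: clos_rt_map (tol_meetl b) _ _ Hce.
Qed.

Lemma tol_bot_top_full : T \bot \top -> is_full_rel T.
Proof.
move=> T01 x y; have := tol_meetl x T01; have := tol_meetl y (Tsym T01).
rewrite !meetx0 !meetx1 => Ty0 T0x; apply: Tsym.
by have [] := Tcomp Ty0 T0x; rewrite joinx0 join0x.
Qed.

Lemma atom_meet (a x : L) : atom a -> x `&` a = \bot \/ x `&` a = a.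
Proof.
case/andP=> _ /existsPn noBetween.
have [-> | ne0] := eqVneq (x `&` a) \bot; first by left.
have [-> | nea] := eqVneq (x `&` a) a; first by right.
by move: (noBetween (x `&` a)); rewrite !lt_neqAle eq_sym ne0 nea le0x leIr.
Qed.

Lemma coatom_join (a x : L) : coatom a -> x `|` a = \top \/ x `|` a = a.
Proof.
case/andP=> _ /existsPn noBetween.
have [-> | ne1] := eqVneq (x `|` a) \top; first by left.
have [-> | nea] := eqVneq (x `|` a) a; first by right.
by move: (noBetween (x `|` a)); rewrite !lt_neqAle ne1 eq_sym nea leUr lex1.
Qed.

Lemma clos_rt_tol_atom a : atom a -> clos_refl_trans _ T \bot a -> T \bot a.
Proof.
move=> Ha Hchain; have a_ne0 : a `&` a != \bot.
  by rewrite meetxx; case/andP: Ha; rewrite lt_def => /andP[].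
have [u [v [/(tol_meetr a) Tuv /eqP u0 v0]]] :=
  clos_rt_cross (P := fun x => x `&` a == \bot) Hchain (introT eqP (meet0x a)) a_ne0.
by case: (atom_meet v Ha) v0 Tuv => ->; rewrite ?eqxx // u0.
Qed.

Lemma clos_rt_tol_coatom a : coatom a -> clos_refl_trans _ T a \top -> T a \top.
Proof.
move=> Ha Hchain; have a_ne1 : a `|` a != \top.
  by rewrite joinxx; case/andP: Ha; rewrite lt_def eq_sym => /andP[].
have top_joined : ~~ (\top `|` a != \top) by rewrite join1x eqxx.
have [u [v [/(tol_joinr a) Tuv u1 /negPn/eqP v1]]] :=
  clos_rt_cross (P := fun x => x `|` a != \top) Hchain a_ne1 top_joined.
by case: (coatom_join u Ha) u1 Tuv => ->; rewrite ?eqxx // v1.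
Qed.

Lemma tolerance_trivial : simple_lattice (L := L) ->
  (\join_(a : L | atom a) a = \top \/ \meet_(a : L | coatom a) a = \bot) ->
  is_identity_rel T \/ is_full_rel T.
Proof.
move=> Lsimple atoms_cover.
have [closure_id | closure_full] := Lsimple _ clos_rt_tol_congruence.
  by left=> x y; split=> [/(rt_step _ T)/closure_id | ->].
right; apply: tol_bot_top_full.
case: atoms_cover => <-.
  elim/big_ind: _ => [| x y T0x T0y | a Ha]; first exact: Trefl.
    by have [] := Tcomp T0x T0y; rewrite joinxx.
  exact: clos_rt_tol_atom Ha (closure_full _ _).
elim/big_ind: _ => [| x y Tx1 Ty1 | a Ha]; first exact: Trefl.
  by have [] := Tcomp Tx1 Ty1; rewrite meetxx.
exact: clos_rt_tol_coatom Ha (closure_full _ _).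
Qed.

End Tolerance.

Definition pair2 (A : Type) (x y : A) : 'I_2 -> A :=
  fun i => if i == ord0 then x else y.

Section Polynomials.
Context {d : Order.disp_t} {L : finTBLatticeType d}.

Fixpoint lpoly_subst m n (p : lpoly L m) (q : 'I_m -> lpoly L n) : lpoly L n :=
  match p with
  | PVar i => q i
  | PConst c => PConst n c
  | PJoin p1 p2 => PJoin (lpoly_subst p1 q) (lpoly_subst p2 q)
  | PMeet p1 p2 => PMeet (lpoly_subst p1 q) (lpoly_subst p2 q)
  end.

Lemma eq_lpoly_eval n (p : lpoly L n) x y : x =1 y -> lpoly_eval p x = lpoly_eval p y.
Proof. by move=> exy; elim: p => //= [p -> q ->|p -> q ->]. Qed.

Lemma lpoly_eval_subst m n (p : lpoly L m) (q : 'I_m -> lpoly L n) x :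
  lpoly_eval (lpoly_subst p q) x = lpoly_eval p (fun i => lpoly_eval (q i) x).
Proof. by elim: p => //= [p -> q' ->|p -> q' ->]. Qed.

Lemma lpoly_eval_subst2 n (p : lpoly L 2) (q r : lpoly L n) x :
  lpoly_eval (lpoly_subst p (pair2 q r)) x =
  lpoly_eval p (pair2 (lpoly_eval q x) (lpoly_eval r x)).
Proof. by rewrite lpoly_eval_subst; apply: eq_lpoly_eval => i; rewrite /pair2; case: ifP. Qed.

Lemma lpoly_eval_mono n (p : lpoly L n) x y :
  (forall i, x i <= y i) -> lpoly_eval p x <= lpoly_eval p y.
Proof. by move=> lexy; elim: p => //= p1 IH1 p2 IH2; [exact: leU2 | exact: leI2]. Qed.

Lemma lpoly_eval_bigjoin n (I : Type) (r : seq I) (P : pred I) (F : I -> lpoly L n) x :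
  lpoly_eval (\big[@PJoin L n/PConst n \bot]_(i <- r | P i) F i) x =
  \join_(i <- r | P i) lpoly_eval (F i) x.
Proof. exact: (big_morph (fun p => lpoly_eval p x)). Qed.

Lemma lpoly_eval_bigmeet n (I : Type) (r : seq I) (P : pred I) (F : I -> lpoly L n) x :
  lpoly_eval (\big[@PMeet L n/PConst n \top]_(i <- r | P i) F i) x =
  \meet_(i <- r | P i) lpoly_eval (F i) x.
Proof. exact: (big_morph (fun p => lpoly_eval p x)). Qed.

Definition poly_tol (x y : L) (u v : L) : Prop :=
  exists p : lpoly L 2,
    u = lpoly_eval p (pair2 x y) /\ v = lpoly_eval p (pair2 y x).

Lemma poly_tol_tolerance x y : tolerance (poly_tol x y).
Proof.
split; first by move=> c; exists (PConst 2 c).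
split.
  move=> u v [p [-> ->]].
  exists (lpoly_subst p (pair2 (PVar L ord_max) (PVar L ord0))).
  by rewrite !lpoly_eval_subst2.
move=> a b c e [p [-> ->]] [q [-> ->]].
by split; [exists (PJoin p q) | exists (PMeet p q)].
Qed.

End Polynomials.

Section Indicator.
Context {d : Order.disp_t} {L : finTBLatticeType d}.

Definition indicator (b : bool) : L := if b then \top else \bot.

Lemma bigmeet_indicator (I : finType) (B : pred I) :
  \meet_(i : I) indicator (B i) = indicator [forall i, B i].
Proof.
case: (boolP [forall i, B i]) => [/forallP allB | /forallPn [i /negbTE Bi]].
  by rewrite big1 // => i _; rewrite /indicator allB.
by apply/le_anti; rewrite /indicator le0x andbT (meets_max (j := i)) // Bi.
Qed.

Lemma monotone_join_decomposition n (f : ('I_n -> L) -> L) :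
  (forall x y, (forall i, x i <= y i) -> f x <= f y) ->
  forall z, f z = \join_(c : {ffun 'I_n -> L}) (f c `&` indicator [forall i, c i <= z i]).
Proof.
move=> f_mono z; apply/le_anti/andP; split.
  apply: (joins_min (j := [ffun i => z i])) => //.
  rewrite /indicator (_ : [forall i, _] = true) ?meetx1; last by apply/forallP => i; rewrite ffunE.
  by apply: f_mono => i; rewrite ffunE.
apply/joinsP => c _; rewrite /indicator; case: forallP => [c_le_z | _].
  by rewrite meetx1; apply: f_mono => i; apply/c_le_z.
by rewrite meetx0 le0x.
Qed.

End Indicator.

Section Interpolation.
Context {d : Order.disp_t} {L : finTBLatticeType d}.
Variable g : L -> L -> lpoly L 2.
Hypothesis g_separates : forall b y : L, ~~ (b <= y) ->
  lpoly_eval (g b y) (pair2 (b `|` y) y) = \top /\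
  lpoly_eval (g b y) (pair2 y (b `|` y)) = \bot.

(* If b <= z i, every factor is at least g b y (b v y, y) = 1; otherwise the
   factor y := z i is at most g b y (z i, b v z i) = 0. *)
Definition threshold_poly n (i : 'I_n) (b : L) : lpoly L n :=
  \big[@PMeet L n/PConst n \top]_(y | ~~ (b <= y))
    lpoly_subst (g b y) (pair2 (PJoin (PVar L i) (PConst n y)) (PConst n y)).

Lemma threshold_polyE n (i : 'I_n) b z :
  lpoly_eval (threshold_poly i b) z = indicator (b <= z i).
Proof.
rewrite lpoly_eval_bigmeet /indicator; case: ifPn => [b_le_zi | b_nle_zi].
  apply/eqP; rewrite eq_le lex1; apply/meetsP => y b_nle_y.
  rewrite lpoly_eval_subst2 /= -(g_separates b_nle_y).1.
  by apply: lpoly_eval_mono => j; rewrite /pair2; case: ifP => // _; exact: leU2.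
apply/eqP; rewrite eq_le le0x andbT (meets_max (j := z i)) //.
rewrite lpoly_eval_subst2 /= joinxx -(g_separates b_nle_zi).2.
by apply: lpoly_eval_mono => j; rewrite /pair2; case: ifP => // _; exact: leUr.
Qed.

Definition upset_poly n (c : 'I_n -> L) : lpoly L n :=
  \big[@PMeet L n/PConst n \top]_i threshold_poly i (c i).

Lemma upset_polyE n (c : 'I_n -> L) z :
  lpoly_eval (upset_poly c) z = indicator [forall i, c i <= z i].
Proof.
rewrite lpoly_eval_bigmeet -bigmeet_indicator.
by apply: eq_bigr => i _; rewrite threshold_polyE.
Qed.

Definition interpolation_poly n (f : ('I_n -> L) -> L) : lpoly L n :=
  \big[@PJoin L n/PConst n \bot]_(c : {ffun 'I_n -> L})
    PMeet (PConst n (f c)) (upset_poly c).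

Lemma interpolation_polyE n (f : ('I_n -> L) -> L) :
  (forall x y, (forall i, x i <= y i) -> f x <= f y) ->
  forall z, f z = lpoly_eval (interpolation_poly f) z.
Proof.
move=> f_mono z; rewrite lpoly_eval_bigjoin (monotone_join_decomposition f_mono).
by apply: eq_bigr => c _; rewrite /= upset_polyE.
Qed.

End Interpolation.

Section Separation.
Context {d : Order.disp_t} {L : finTBLatticeType d}.
Hypothesis tolerance_trivial :
  forall T : L -> L -> Prop, tolerance T -> is_identity_rel T \/ is_full_rel T.

Lemma separating_poly (b y : L) : ~~ (b <= y) -> exists p : lpoly L 2,
  lpoly_eval p (pair2 (b `|` y) y) = \top /\ lpoly_eval p (pair2 y (b `|` y)) = \bot.
Proof.
move=> b_nle_y; have [tol_id | tol_full] := tolerance_trivial (poly_tol_tolerance (b `|` y) y).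
  suff /tol_id/eqP : poly_tol (b `|` y) y (b `|` y) y by rewrite eq_joinr (negbTE b_nle_y).
  by exists (PVar L ord0).
by have [p [-> ->]] := tol_full \top \bot; exists p.
Qed.

Lemma separating_poly_fun : exists g : L -> L -> lpoly L 2, forall b y, ~~ (b <= y) ->
  lpoly_eval (g b y) (pair2 (b `|` y) y) = \top /\
  lpoly_eval (g b y) (pair2 y (b `|` y)) = \bot.
Proof.
have sep_at b y : exists p : lpoly L 2, ~~ (b <= y) ->
    lpoly_eval p (pair2 (b `|` y) y) = \top /\ lpoly_eval p (pair2 y (b `|` y)) = \bot.
  have [_ | /separating_poly [p p_sep]] := boolP (b <= y); last by exists p.
  by exists (PConst 2 \bot).
have [g g_sep] := fin_all_exists (fun b => fin_all_exists (sep_at b)).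
by exists g.
Qed.

Lemma aggregation_pol01 n (f : ('I_n -> L) -> L) : aggregation f -> pol01 f.
Proof.
case=> f_mono f_bounds; split=> //.
have [g g_sep] := separating_poly_fun.
by exists (interpolation_poly g f); apply: interpolation_polyE.
Qed.

End Separation.

Lemma pol01_aggregation {d : Order.disp_t} {L : finTBLatticeType d} n
  (f : ('I_n -> L) -> L) : pol01 f -> aggregation f.
Proof.
case=> [[p f_eq] f_bounds]; split=> // x y lexy.
by rewrite !f_eq; apply: lpoly_eval_mono.
Qed.

Theorem mainTheorem8 (d : Order.disp_t) (L : finTBLatticeType d) :
  simple_lattice (L := L) ->
  (\join_(a : L | atom a) a = \top \/
   \meet_(a : L | coatom a) a = \bot) ->
  (forall T : L -> L -> Prop, tolerance T -> is_identity_rel T \/ is_full_rel T) /\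
  (forall (n : nat) (f : ('I_n -> L) -> L), (0 < n)%N ->
     (aggregation f <-> pol01 f)).
Proof.
move=> Lsimple atoms_cover.
have tol_trivial (T : L -> L -> Prop) :
    tolerance T -> is_identity_rel T \/ is_full_rel T.
  by move=> T_tol; exact: tolerance_trivial T_tol Lsimple atoms_cover.
split=> // n f _.
by split; [exact: aggregation_pol01 | exact: pol01_aggregation].
Qed.
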